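(* Let $H$ be an even graph (every vertex of even degree) properly embedded in an oriented surface, with edge weights $K_{xy}$ (and fixed square roots $\sqrt{K_{xy}}$). Then \[ \prod_{xy\in E(H)}K_{xy}=\sum_{(M_v)_{v\in V(H)}}\ \prod_{v\in V(H)}(-1)^{\mathrm{cr}(M_v)}\prod_{\{xv,vz\}\in M_v}\sqrt{K_{xv}K_{vz}}, \] where the sum is over all families $(M_v)_{v}$ in which each $M_v$ is a perfect matching of the complete graph $\iota(v,H)$ whose vertex set is the set of edges of $H$ incident to $v$.
   Context: For a perfect matching $M_v$ of $\iota(v,H)$, $\mathrm{cr}(M_v)$ is the number of pairs of matched pairs $\{e_1,e_2\},\{h_1,h_2\}\in M_v$ that cross at $v$, i.e. satisfy $e_1<h_1<e_2<h_2$ in the cyclic order of edges around $v$ induced by the orientation of the surface. *)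

From HB Require Import structures.
From mathcomp Require Import all_boot all_order all_algebra.
Set Implicit Arguments. Unset Strict Implicit. Unset Printing Implicit Defensive.
Import GRing.Theory.

(* A simple graph on vertex set 'I_n, given by a symmetric irreflexive
   adjacency relation [adj].  Edges are the 2-element sets [set x; y]. *)
Definition simple_graph (n : nat) (adj : rel 'I_n) : Prop :=
  symmetric adj /\ irreflexive adj.

(* Neighbourhood of v = set of edges incident to v, identified with the
   other endpoints (graph is simple). *)
Definition nbhd (n : nat) (adj : rel 'I_n) (v : 'I_n) : {set 'I_n} :=
  [set u | adj v u].

Definition even_graph (n : nat) (adj : rel 'I_n) : Prop :=
  forall v, ~~ odd #|nbhd adj v|.

(* Rotation system induced by an oriented embedding: at each vertex v,
   [rot v] lists the edges incident to v (through their other endpoints)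
   in the cyclic order given by the orientation of the surface. *)
Definition rotation_system (n : nat) (adj : rel 'I_n)
  (rot : 'I_n -> seq 'I_n) : Prop :=
  forall v, uniq (rot v) /\ (forall u, (u \in rot v) = adj v u).

Definition perfect_matching (n : nat) (adj : rel 'I_n) (v : 'I_n)
  (M : {set {set 'I_n}}) : bool :=
  partition M (nbhd adj v) && [forall B in M, #|B| == 2].

(* e1 < h1 < e2 < h2 in the cyclic order of the sequence s
   (positions in s, up to cyclic rotation). *)
Definition lin_lt4 (a b c d : nat) : bool := [&& a < b, b < c & c < d]%N.
Definition cyc_lt4 (n : nat) (s : seq 'I_n) (e1 h1 e2 h2 : 'I_n) : bool :=
  let a := index e1 s in let b := index h1 s in
  let c := index e2 s in let d := index h2 s in
  [|| lin_lt4 a b c d, lin_lt4 b c d a, lin_lt4 c d a b | lin_lt4 d a b c].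

Definition cross_at (n : nat) (s : seq 'I_n) (B1 B2 : {set 'I_n}) : bool :=
  [exists e1 in B1, exists e2 in B1, exists h1 in B2, exists h2 in B2,
     cyc_lt4 s e1 h1 e2 h2].

Definition cr (n : nat) (s : seq 'I_n) (M : {set {set 'I_n}}) : nat :=
  #|[set P : {set {set 'I_n}} | (P \subset M) &&
      [exists B1 in P, exists B2 in P,
         (P == [set B1; B2]) && (B1 != B2) && cross_at s B1 B2]]|.

From HB Require Import structures.
From mathcomp Require Import all_boot all_order all_algebra.
From mathcomp Require Import zify.
Import GRing.Theory.
Set Implicit Arguments. Unset Strict Implicit. Unset Printing Implicit Defensive.
Local Open Scope ring_scope.

(* Both sides factor over the vertices.  On the right, distributivity turns
   the sum over families (M_v)_v into a product over v of sums over perfect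
   matchings M of the edges at v; for every such M the weight
   \prod_{B in M} \prod_{u in B} sqK{u,v} is just \prod_{u ~ v} sqK{u,v},
   so the factor at v is this product times the signed count
   \sum_M (-1)^cr(M).  The heart of the proof is that this signed count is 1
   for every even set S of positions in a cyclic order (sum_sign_matchings):
   match the first element p of S with some q; the pair {p,q} crosses exactly
   those pairs having one end strictly between p and q, so its contribution
   to the sign is (-1)^(rank of q in S minus p), and by induction the sum
   reduces to an alternating sum of odd length, which is 1.  Positions are
   first occurrences in the rotation.  On the left,
   each edge weight K{x,y} = sqK{x,y}^2 is split as one factor at x and one
   at y (edge_product_by_vertices). *)

Section CyclicOrder.
Variables (n : nat) (s : seq 'I_n).

Lemma cyc_lt4_rot e1 h1 e2 h2 : cyc_lt4 s e1 h1 e2 h2 = cyc_lt4 s h1 e2 h2 e1.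
Proof. rewrite /cyc_lt4 /lin_lt4; lia. Qed.

Lemma cyc_lt4_swap x y h1 h2 : cyc_lt4 s x h1 y h2 = cyc_lt4 s y h2 x h1.
Proof. by rewrite cyc_lt4_rot cyc_lt4_rot. Qed.

Lemma cyc_lt4_eq13 x h1 h2 : cyc_lt4 s x h1 x h2 = false.
Proof. rewrite /cyc_lt4 /lin_lt4; lia. Qed.

Lemma cyc_lt4_eq24 e1 x e2 : cyc_lt4 s e1 x e2 x = false.
Proof. rewrite /cyc_lt4 /lin_lt4; lia. Qed.

Lemma cyc_lt4_from_min p x q y :
  (index p s < index x s)%N -> (index p s < index q s)%N ->
  (index p s < index y s)%N ->
  cyc_lt4 s p x q y = (index x s < index q s < index y s)%N.
Proof.
rewrite /cyc_lt4 /lin_lt4.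
move: (index p s) (index q s) (index x s) (index y s) => a c u v; lia.
Qed.

Lemma cross_atC B1 B2 : cross_at s B1 B2 = cross_at s B2 B1.
Proof.
suff cross_sym B B' : cross_at s B B' -> cross_at s B' B.
  by apply/idP/idP; apply: cross_sym.
case/existsP=> e1 /andP[He1 /existsP[e2 /andP[He2
   /existsP[h1 /andP[Hh1 /existsP[h2 /andP[Hh2 cross]]]]]]].
apply/existsP; exists h1; rewrite Hh1 /=; apply/existsP; exists h2; rewrite Hh2 /=.
apply/existsP; exists e2; rewrite He2 /=; apply/existsP; exists e1; rewrite He1 /=.
by rewrite -cyc_lt4_rot.
Qed.

End CyclicOrder.

Lemma exists_in_set2 (T : finType) (a b : T) (P : pred T) :
  [exists x in [set a; b], P x] = P a || P b.
Proof.
apply/existsP/orP => [[x /andP[]]|[Pa|Pb]].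
- by rewrite !inE => /orP[]/eqP-> ->; [left|right].
- by exists a; rewrite !inE eqxx Pa.
- by exists b; rewrite !inE eqxx orbT.
Qed.

Section CrossingNumber.
Variables (n : nat) (s : seq 'I_n).

Definition crossings (M : {set {set 'I_n}}) : {set {set {set 'I_n}}} :=
  [set P : {set {set 'I_n}} | (P \subset M) &&
      [exists B1 in P, exists B2 in P,
         (P == [set B1; B2]) && (B1 != B2) && cross_at s B1 B2]].

Lemma crE M : cr s M = #|crossings M|.
Proof. by []. Qed.

Lemma cr_set0 : cr s set0 = 0%N.
Proof.
rewrite crE; apply/eqP; rewrite cards_eq0; apply/eqP/setP => P; rewrite !inE.
apply/negbTE/negP => /andP[sub /existsP[B1 /andP[PB1 _]]].
by have := subsetP sub _ PB1; rewrite inE.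
Qed.

Lemma crossings_setU1 (M : {set {set 'I_n}}) (A : {set 'I_n}) : A \notin M ->
  crossings (A |: M) =
  crossings M :|: [set [set A; B] | B in [set B in M | cross_at s A B]].
Proof.
move=> AM; apply/setP => P; rewrite !inE; apply/idP/idP.
- case/andP=> sub Hex; have := Hex.
  case/existsP=> B1 /andP[PB1 /existsP[B2 /andP[PB2 /andP[/andP[/eqP EP nB] c12]]]].
  have in_M B : B \in P -> B != A -> B \in M.
    by move=> PB nBA; have := subsetP sub B PB; rewrite !inE (negbTE nBA).
  case: (boolP (A \in P)) => AP.
  + apply/orP; right; apply/imsetP.
    have : (A == B1) || (A == B2) by move: AP; rewrite EP !inE.
    case/orP=> /eqP eA.
    * exists B2; last by rewrite EP eA.
      by rewrite inE eA c12 andbT in_M // eA eq_sym.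
    * exists B1; last by rewrite EP eA setUC.
      by rewrite inE eA cross_atC c12 andbT in_M // eA.
  + apply/orP; left; rewrite Hex andbT.
    apply/subsetP => X PX; apply: in_M => //.
    by apply: contraNneq AP => <-.
- case/orP.
  + case/andP=> sub ->; rewrite andbT; apply: subset_trans sub _.
    exact: subsetUr.
  + case/imsetP=> B; rewrite inE => /andP[BM cAB] ->.
    apply/andP; split.
      by apply/subsetP => X; rewrite !inE => /orP[]/eqP->; rewrite ?eqxx ?BM ?orbT.
    apply/existsP; exists A; rewrite !inE eqxx /=.
    apply/existsP; exists B; rewrite !inE eqxx orbT /= eqxx /= cAB andbT.
    by apply: contraNneq AM => ->.
Qed.

Lemma cr_setU1 (M : {set {set 'I_n}}) (A : {set 'I_n}) : A \notin M ->
  cr s (A |: M) = (cr s M + #|[set B in M | cross_at s A B]|)%N.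
Proof.
move=> AM; rewrite !crE (crossings_setU1 AM) cardsU.
have -> : crossings M :&: [set [set A; B] | B in [set B in M | cross_at s A B]]
    = set0.
  apply/setP => P; rewrite !inE.
  apply/negbTE/negP => /andP[/andP[sub _] /imsetP[B _ eP]].
  by move: AM; rewrite (subsetP sub A) // eP !inE eqxx.
rewrite cards0 subn0 card_in_imset // => B B'; rewrite !inE.
move=> /andP[BM _] /andP[B'M _] eAB.
have : B \in [set A; B'] by rewrite -eAB !inE eqxx orbT.
rewrite !inE => /orP[/eqP eBA|/eqP //].
by move: AM; rewrite -eBA BM.
Qed.

End CrossingNumber.

Section PerfectMatchings.
Variable n : nat.
Implicit Types (S : {set 'I_n}) (M : {set {set 'I_n}}).

Definition pmatch S M : bool := partition M S && [forall B in M, #|B| == 2].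

Lemma perfect_matchingE (adj : rel 'I_n) v M :
  perfect_matching adj v M = pmatch (nbhd adj v) M.
Proof. by []. Qed.

Lemma pmatch_set0 M : pmatch set0 M = (M == set0).
Proof.
apply/idP/idP.
- case/andP=> /and3P[/eqP cov _ n0] _.
  apply/eqP/setP => B; rewrite inE; apply/negbTE/negP => BM.
  have : B \subset cover M := bigcup_sup B BM.
  by rewrite cov subset0 => /eqP eB; move: n0; rewrite -eB BM.
- move/eqP->; rewrite /pmatch /partition /trivIset /cover !big_set0 cards0.
  by rewrite !eqxx inE /=; apply/forallP => B; rewrite inE.
Qed.

Lemma pmatch_setU1 S M p q :
  p \in S -> q \in S -> p != q ->
  [&& pmatch S ([set p; q] |: M), [set p; q] \in [set p; q] |: M &
      ([set p; q] |: M) :\ [set p; q] == M] = pmatch (S :\: [set p; q]) M.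
Proof.
move=> pS qS npq; set pq := [set p; q].
have pqS : pq \subset S by apply/subsetP => x; rewrite !inE => /orP[]/eqP->.
apply/idP/idP.
- case/and3P=> /andP[/and3P[/eqP cov tI n0] sz] _ /eqP eM.
  apply/andP; split; last first.
    apply/forallP => B; apply/implyP => BM.
    exact: (implyP (forallP sz B) (setU1r _ BM)).
  apply/and3P; split.
  - by rewrite -{1}eM coverD1 ?setU11 // cov.
  - by apply: trivIsetS tI; apply: subsetUr.
  - by apply: contra n0 => h; apply: setU1r.
- case/andP=> /and3P[/eqP cov tI n0] sz.
  have pqM : pq \notin M.
    apply/negP => pqM; have : p \in cover M.
      by apply/bigcupP; exists pq; rewrite ?inE ?eqxx.
    by rewrite cov !inE eqxx.
  rewrite setU11 setU1K // eqxx !andbT.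
  have pq0 : set0 != pq by rewrite eq_sym; apply/set0Pn; exists p; rewrite !inE eqxx.
  apply/andP; split.
    apply/and3P; split.
    - by rewrite /cover big_setU1 //= -/(cover M) cov -{2}(setID S pq) (setIidPr pqS).
    - case: (@trivIsetU1 _ pq M) => // B BM.
      rewrite -setI_eq0; apply/eqP/setP => x; rewrite inE [in RHS]inE.
      apply/negbTE/andP => [[xA xB]].
      have : B \subset cover M := bigcup_sup B BM.
      by move/subsetP/(_ x xB); rewrite cov in_setD xA.
    - by rewrite !inE negb_or pq0.
  apply/forallP => B; apply/implyP; rewrite !inE => /orP[/eqP->|BM].
    by rewrite cards2 npq.
  exact: (implyP (forallP sz B) BM).
Qed.

Lemma pmatch_partner S M p : pmatch S M -> p \in S ->
  exists2 q0, q0 \in S :\ p &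
    forall q, (q \in S :\ p) && ([set p; q] \in M) = (q == q0).
Proof.
case/andP=> /and3P[/eqP cov tI n0] sz pS.
have : p \in cover M by rewrite cov.
case/bigcupP=> B BM pB.
have in_S x : x \in B -> x \in S by move=> xB; rewrite -cov; apply/bigcupP; exists B.
have := forallP sz B; rewrite BM /= => /cards2P[x [y [nxy eB]]].
have [q0 [q0S nq0 eB']] : exists q0, [/\ q0 \in S, q0 != p & B = [set p; q0]].
  have xS : x \in S by apply: in_S; rewrite eB !inE eqxx.
  have yS : y \in S by apply: in_S; rewrite eB !inE eqxx orbT.
  move: pB; rewrite eB !inE => /orP[]/eqP ep.
  + by exists y; rewrite yS ep eq_sym nxy.
  + by exists x; rewrite xS ep nxy setUC.
exists q0; first by rewrite !inE nq0.
move=> q; apply/idP/idP; last by move/eqP->; rewrite !inE nq0 q0S -eB' BM.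
case/andP; rewrite !inE => /andP[nqp qS] pqM.
apply/negPn/negP => nqq0.
have neq : [set p; q] != B.
  apply/negP => /eqP e; have : q \in B by rewrite -e !inE eqxx orbT.
  by rewrite eB' !inE (negbTE nqp) (negbTE nqq0).
have := (elimT trivIsetP tI) _ _ pqM BM neq.
by move/disjointFr => /(_ p); rewrite !inE eqxx eB' !inE eqxx => /(_ isT).
Qed.

End PerfectMatchings.

Section Signs.
Variable R : comNzRingType.

Lemma sum_alt_sign m : \sum_(i <- iota 0 m) ((-1) ^+ i : R) = (odd m)%:R.
Proof.
elim: m => [|m IH]; first by rewrite big_nil.
rewrite -addn1 iotaD big_cat /= IH big_cons big_nil addr0 add0n.
rewrite -signr_odd addn1 /=; case: (odd m) => /=.
  by rewrite expr1 addrN.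
by rewrite expr0 add0r.
Qed.

Variables (n : nat) (s : seq 'I_n).

Definition rank_in (A : {set 'I_n}) (q : 'I_n) : nat :=
  #|[set x in A | (index x s < index q s)%N]|.

(* On A, rank_in A is a bijection onto [0, #|A|), hence for odd #|A| the
   signs (-1)^rank sum to 1. *)
Lemma sum_sign_rank (A : {set 'I_n}) :
  {subset A <= s} -> odd #|A| -> \sum_(q in A) ((-1) ^+ rank_in A q : R) = 1.
Proof.
move=> sAs oA.
have rank_lt q q' : q \in A -> (index q s < index q' s)%N ->
    (rank_in A q < rank_in A q')%N.
  move=> qA lt; apply: proper_card; apply/properP; split.
    by apply/subsetP => x; rewrite !inE => /andP[-> h]; apply: ltn_trans h lt.
  by exists q; rewrite !inE ?qA ?lt // ltnn andbF.
have rank_inj : {in enum A &, injective (rank_in A)}.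
  move=> q q'; rewrite !mem_enum => qA q'A E.
  case: (ltngtP (index q s) (index q' s)) => [lt|gt|eq].
  - by have := rank_lt _ _ qA lt; rewrite E ltnn.
  - by have := rank_lt _ _ q'A gt; rewrite E ltnn.
  - exact: (index_inj q (sAs _ qA) (sAs _ q'A) eq).
have rank_uniq : uniq (map (rank_in A) (enum A)).
  by rewrite map_inj_in_uniq // enum_uniq.
have rank_sub : {subset map (rank_in A) (enum A) <= iota 0 #|A|}.
  move=> i /mapP[q]; rewrite mem_enum => qA ->; rewrite mem_iota /= add0n.
  apply: proper_card; apply/properP; split.
    by apply/subsetP => x; rewrite !inE => /andP[].
  by exists q; rewrite // !inE qA ltnn.
have size_le : (size (iota 0 #|A|) <= size (map (rank_in A) (enum A)))%N.
  by rewrite size_iota size_map -cardE.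
have [_ rank_perm] := uniq_min_size rank_uniq rank_sub size_le.
rewrite -big_enum /= -(big_map (rank_in A) xpredT (fun i => (-1) ^+ i)).
rewrite (perm_big (iota 0 #|A|)); last by apply: uniq_perm => //; apply: iota_uniq.
by rewrite sum_alt_sign oA.
Qed.

End Signs.

Section SignedMatchingCount.
Variables (R : comNzRingType) (n : nat) (s : seq 'I_n).
Variables (S : {set 'I_n}) (p q : 'I_n).
Hypotheses (S_s : {subset S <= s}) (pS : p \in S).
Hypothesis p_first : forall x, x \in S -> (index p s <= index x s)%N.
Hypothesis qS : q \in S :\ p.

Let index_neq x y : x \in S -> y \in S -> x != y -> index x s != index y s.
Proof. by move=> xS yS; apply: contraNneq => /(index_inj x (S_s xS) (S_s yS)) ->. Qed.

Let p_before x : x \in S -> x != p -> (index p s < index x s)%N.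
Proof. by move=> xS nxp; rewrite ltn_neqAle p_first // andbT index_neq // eq_sym. Qed.

Lemma cross_first_pair b d : b \in S -> d \in S ->
  b \notin [set p; q] -> d \notin [set p; q] ->
  cross_at s [set p; q] [set b; d] =
  ((b \in [set x in S :\ p | (index x s < index q s)%N])
   != (d \in [set x in S :\ p | (index x s < index q s)%N])).
Proof.
move=> bS dS; rewrite !inE !negb_or => /andP[nbp nbq] /andP[ndp ndq].
have /andP[nqp qS'] : (q != p) && (q \in S) by rewrite -in_setD1.
rewrite bS dS nbp ndp /=.
rewrite /cross_at !exists_in_set2 !(cyc_lt4_eq13 s p) !(cyc_lt4_eq13 s q).
rewrite !(cyc_lt4_eq24 s _ b) !(cyc_lt4_eq24 s _ d) !(cyc_lt4_swap s q p) /=.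
rewrite !cyc_lt4_from_min ?p_before //.
move: (index_neq bS qS' nbq) (index_neq dS qS' ndq).
move: (index q s) (index b s) (index d s) => c x y neq_bc neq_dc.
by case: (ltngtP x c) neq_bc => // lt_bc; case: (ltngtP y c) neq_dc => //= lt_dc; lia.
Qed.

(* Hence the crossings of {p,q} with a matching of the rest contribute
   (-1)^(rank of q in S minus p): each element ranked below q lies in exactly
   one chord, and a chord crosses {p,q} iff it has one such element. *)
Lemma sign_cross_first_pair M : pmatch (S :\: [set p; q]) M ->
  \prod_(B in M) ((-1) ^+ cross_at s [set p; q] B : R) =
  (-1) ^+ rank_in s (S :\ p) q.
Proof.
case/andP=> /and3P[/eqP cov tI _] sz.
set I := [set x in S :\ p | (index x s < index q s)%N].
transitivity (\prod_(B in M) \prod_(x in B) (if x \in I then -1 else 1 : R)).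
  apply: eq_bigr => B BM.
  have := forallP sz B; rewrite BM => /cards2P[b [d [nbd eB]]].
  have in_rest x : x \in B -> x \in S :\: [set p; q].
    by rewrite -cov => xB; apply/bigcupP; exists B.
  have /setDP[bS bpq] : b \in S :\: [set p; q] by apply: in_rest; rewrite eB !inE eqxx.
  have /setDP[dS dpq] : d \in S :\: [set p; q].
    by apply: in_rest; rewrite eB !inE eqxx orbT.
  have bd : b \notin [set d] by rewrite inE.
  rewrite eB big_setU1 //= big_set1 cross_first_pair // -/I.
  by case: (b \in I); case: (d \in I); rewrite /= ?(mulrNN, mulr1, mul1r, expr1, expr0).
rewrite -big_trivIset // cov -big_mkcondr /= -prodr_const.
apply: eq_bigl => x; apply/andP/idP => [[]//|xI]; split => //.
move: xI; rewrite !inE => /andP[/andP[xp xS] lt].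
by rewrite negb_or xp xS andbT /=; apply: contraTneq lt => ->; rewrite ltnn.
Qed.

Lemma sum_sign_matchings_with_pair :
  \sum_(M | pmatch S M && ([set p; q] \in M)) ((-1) ^+ cr s M : R) =
  (-1) ^+ rank_in s (S :\ p) q *
  \sum_(M | pmatch (S :\: [set p; q]) M) ((-1) ^+ cr s M : R).
Proof.
have /andP[nqp qS'] : (q != p) && (q \in S) by rewrite -in_setD1.
have npq : p != q by rewrite eq_sym.
set pq := [set p; q].
rewrite (reindex_onto (fun M' => pq |: M') (fun M => M :\ pq)) /=; last first.
  by move=> M /andP[_ pqM]; rewrite setD1K.
rewrite [LHS](eq_bigl (fun M' => pmatch (S :\: pq) M')); last first.
  by move=> M'; rewrite -andbA pmatch_setU1.
rewrite mulr_sumr; apply: eq_bigr => M pmM.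
have pqM : pq \notin M.
  by move: pmM; rewrite -pmatch_setU1 // => /and3P[_ _ /eqP <-]; rewrite setD11.
rewrite cr_setU1 // exprD mulrC; congr (_ * _).
rewrite -(sign_cross_first_pair pmM) -prodr_const.
rewrite [in RHS](bigID (fun B => cross_at s pq B)) /=.
rewrite [X in _ * X]big1 ?mulr1; last by move=> B /andP[_ /negbTE ->].
by apply: eq_big => [B|B]; rewrite inE // => /andP[_ ->].
Qed.

End SignedMatchingCount.

Lemma sum_sign_matchings (R : comNzRingType) n (s : seq 'I_n) (S : {set 'I_n}) :
  {subset S <= s} -> ~~ odd #|S| ->
  \sum_(M | pmatch S M) ((-1) ^+ cr s M : R) = 1.
Proof.
move: {2}#|S| (leqnn #|S|) => k; elim: k S => [|k IH] S.
  by rewrite leqn0 => /eqP/cards0_eq -> _ _; rewrite (big_pred1 set0) ?cr_set0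
    // => M; rewrite pmatch_set0.
move=> leS S_s evenS.
case: (set_0Vmem S) => [->|[p0 p0S]].
  by rewrite (big_pred1 set0) ?cr_set0 // => M; rewrite pmatch_set0.
have [p pS p_first] : exists2 p, p \in S & forall x, x \in S -> (index p s <= index x s)%N.
  by case: (arg_minnP (fun x => index x s) p0S) => p; exists p.
(* Group the matchings according to the partner of the first element p. *)
transitivity (\sum_(q in S :\ p)
   \sum_(M | pmatch S M && ([set p; q] \in M)) ((-1) ^+ cr s M : R)).
  symmetry; rewrite (exchange_big_dep (pmatch S)) /=; last by move=> q M _ /andP[].
  apply: eq_bigr => M pmM; have [q0 q0S partner] := pmatch_partner pmM pS.
  by rewrite (big_pred1 q0) // => q; rewrite pmM /= partner.
have oddSp : odd #|S :\ p| by move: evenS; rewrite (cardsD1 p S) pS oddD negbK.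
have Sp_s : {subset S :\ p <= s} by move=> x /setD1P[_ /S_s].
rewrite -[RHS](sum_sign_rank R Sp_s oddSp); apply: eq_bigr => q qSp.
have /andP[nqp qS] : (q != p) && (q \in S) by rewrite -in_setD1.
have pqS : [set p; q] \subset S by apply/subsetP => x; rewrite !inE => /orP[]/eqP->.
have card_rest : #|S :\: [set p; q]| = (#|S| - 2)%N.
  by rewrite cardsD (setIidPr pqS) cards2 eq_sym nqp.
rewrite sum_sign_matchings_with_pair // IH ?mulr1 //.
- by rewrite card_rest; lia.
- by move=> x /setDP[/S_s].
- have := subset_leq_card pqS; rewrite cards2 eq_sym nqp => two.
  by rewrite card_rest oddB //= addbF.
Qed.

Lemma edge_product_by_vertices (R : comNzRingType) n (adj : rel 'I_n)
    (G : {set 'I_n} -> R) :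
  symmetric adj -> irreflexive adj ->
  \prod_(x < n) \prod_(y < n | ((x < y)%N && adj x y)) (G [set x; y] * G [set x; y])
  = \prod_(v < n) \prod_(u in nbhd adj v) G [set u; v].
Proof.
move=> adj_sym adj_irr.
rewrite [RHS](eq_bigr (fun v => (\prod_(u < n | adj v u && (v < u)%N) G [set u; v]) *
    \prod_(u < n | adj v u && ~~ (v < u)%N) G [set u; v])); last first.
  move=> v _; rewrite [LHS](bigID (fun u : 'I_n => (v < u)%N)) /=.
  by congr (_ * _); apply: eq_bigl => u; rewrite inE.
under [LHS]eq_bigr do rewrite big_split.
rewrite !big_split /=; congr (_ * _).
  apply: eq_bigr => x _; apply: eq_big => y; first by rewrite andbC.
  by move=> _; rewrite setUC.
rewrite (exchange_big_dep xpredT) //=.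
apply: eq_bigr => x _; apply: eq_bigl => y /=.
rewrite (adj_sym y x) -leqNgt.
case a: (adj x y); rewrite ?andbF ?andbT //= ltn_neqAle.
suff -> : (y != x :> nat) by [].
by apply/negP => /eqP/val_inj exy; move: a; rewrite exy adj_irr.
Qed.

(* The local factor at v: every perfect matching of the edges at v has the
   same weight, and the signs add up to 1. *)
Lemma vertex_matching_sum (R : comNzRingType) n (adj : rel 'I_n) (s : seq 'I_n)
    (sqK : {set 'I_n} -> R) (v : 'I_n) :
  (forall u, (u \in s) = adj v u) -> ~~ odd #|nbhd adj v| ->
  \sum_(M | perfect_matching adj v M)
     ((-1) ^+ cr s M * \prod_(B in M) \prod_(u in B) sqK [set u; v]) =
  \prod_(u in nbhd adj v) sqK [set u; v].
Proof.
move=> s_nbhd evenv.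
rewrite (eq_bigr (fun M => (-1) ^+ cr s M * \prod_(u in nbhd adj v) sqK [set u; v])).
  rewrite -mulr_suml (eq_bigl _ _ (perfect_matchingE adj v)) sum_sign_matchings //.
    by rewrite mul1r.
  by move=> x; rewrite inE s_nbhd.
by move=> M /andP[/and3P[/eqP cov tI _] _]; rewrite -big_trivIset // cov.
Qed.

Theorem mainTheorem6 (R : comNzRingType) (n : nat) (adj : rel 'I_n)
  (rot : 'I_n -> seq 'I_n) (K sqK : {set 'I_n} -> R)
  (Hg : simple_graph adj) (Heven : even_graph adj)
  (Hrot : rotation_system adj rot)
  (Hsq : forall x y : 'I_n, adj x y -> sqK [set x; y] * sqK [set x; y] = K [set x; y]) :
  \prod_(x < n) \prod_(y < n | ((x < y)%N && adj x y)) K [set x; y] =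
  \sum_(f : {ffun 'I_n -> {set {set 'I_n}}} | [forall v, perfect_matching adj v (f v)])
    \prod_(v < n) ((-1) ^+ cr (rot v) (f v) *
                   \prod_(B in f v) \prod_(u in B) sqK [set u; v]).
Proof.
case: Hg => adj_sym adj_irr.
have sum_families : \sum_(f : {ffun 'I_n -> {set {set 'I_n}}} |
      [forall v, perfect_matching adj v (f v)])
    \prod_(v < n) ((-1) ^+ cr (rot v) (f v) *
                   \prod_(B in f v) \prod_(u in B) sqK [set u; v]) =
  \prod_(v < n) \sum_(M | perfect_matching adj v M)
     ((-1) ^+ cr (rot v) M * \prod_(B in M) \prod_(u in B) sqK [set u; v]).
  rewrite bigA_distr_big_dep; apply: eq_bigl => f.
  by apply/forallP/familyP => H v; apply: H.
rewrite sum_families.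
rewrite (eq_bigr _ (fun v _ => vertex_matching_sum sqK (Hrot v).2 (Heven v))).
rewrite -edge_product_by_vertices //.
by apply: eq_bigr => x _; apply: eq_bigr => y /andP[_ /Hsq].
Qed.
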